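(* Let $A:\mathscr T\to\mathscr U$ be a morphism of $\mathscr J$-theories whose commutant $\mathscr T^\perp_A$ exists. Then $\mathscr T^\perp_A$ is a strong subtheory of $\mathscr U$: the $\mathscr V$-functor $\iota:\mathscr T^\perp_A\to\mathscr U$ that is the identity on objects and whose hom-components are the end projections at $I$, $\mathscr T^\perp_A(J,K)\to\mathscr U([J,A]I,[K,A]I)=\mathscr U(J,K)$, is a morphism of $\mathscr J$-theories whose hom-components are strong monomorphisms in $\mathscr V$.
   Context: $(\mathscr V,\otimes,I)$ is a closed symmetric monoidal category, $\underline{\mathscr V}$ the associated $\mathscr V$-category; everything is $\mathscr V$-enriched. A system of arities is a full sub-$\mathscr V$-category $\mathscr J\hookrightarrow\underline{\mathscr V}$ containing $I$ and closed under $\otimes$. A cotensor $[V,C]$ of $C\in\mathscr C$ by $V\in\mathscr V$ is an object with counit $V\to\mathscr C([V,C],C)$ inducing an isomorphism $\mathscr C(-,[V,C])\cong\underline{\mathscr V}(V,\mathscr C(-,C))$. A $\mathscr J$-theory is a $\mathscr V$-category $\mathscr T$ with $\mathrm{ob}\,\mathscr T=\mathrm{ob}\,\mathscr J$ and an identity-on-objects $\mathscr V$-functor $\tau:\mathscr J^{\mathrm{op}}\to\mathscr T$ preserving cotensors by objects of $\mathscr J$; each $J$ is a cotensor $[J,I]$ in $\mathscr T$ with counit $J\cong\underline{\mathscr V}(I,J)=\mathscr J^{\mathrm{op}}(J,I)\xrightarrow{\tau}\mathscr T(J,I)$. A morphism of $\mathscr J$-theories $(\mathscr T,\tau)\to(\mathscr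 U,\upsilon)$ is a $\mathscr V$-functor $A$ with $A\tau=\upsilon$. A strong subtheory of $\mathscr U$ is a morphism into $\mathscr U$ whose hom-components are strong monomorphisms. Fix designated cotensors $[J,K]$ in $\mathscr U$ with $[J,I]=J$ and $[I,K]=K$, inducing $\mathscr V$-functors $[J,-]:\mathscr U\to\mathscr U$; put $[J,A]=[J,-]\circ A$ (so $[J,A]I=J$). The commutant $\mathscr T^\perp_A$ is the $\mathscr J$-theory with objects those of $\mathscr J$, hom-objects $\mathscr T^\perp_A(J,K)=\int_{L\in\mathscr T}\mathscr U([J,A]L,[K,A]L)$ (objects of $\mathscr V$-natural transformations $[J,A]\Rightarrow[K,A]$), composition/identities of natural transformations, and $\mathscr J$-theory structure induced by the cotensors $[J,A]$ of $A$; it exists when these ends exist. *)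

From Stdlib Require Import Utf8.

Set Implicit Arguments.
Unset Strict Implicit.

Record CSMC := {
  ob : Type;
  hom : ob -> ob -> Type;
  comp : forall {a b c : ob}, hom b c -> hom a b -> hom a c;
  idm : forall a : ob, hom a a;
  comp_assoc : forall a b c d (f : hom a b) (g : hom b c) (h : hom c d),
      comp h (comp g f) = comp (comp h g) f;
  comp_idl : forall a b (f : hom a b), comp (idm b) f = f;
  comp_idr : forall a b (f : hom a b), comp f (idm a) = f;
  tens : ob -> ob -> ob;
  tensm : forall {a b c d : ob}, hom a b -> hom c d -> hom (tens a c) (tens b d);
  tensm_id : forall a b, tensm (idm a) (idm b) = idm (tens a b);
  tensm_comp : forall a b c a' b' c' (f : hom a b) (g : hom b c)
                 (f' : hom a' b') (g' : hom b' c'),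
      tensm (comp g f) (comp g' f') = comp (tensm g g') (tensm f f');
  unit : ob;
  assoc : forall a b c, hom (tens (tens a b) c) (tens a (tens b c));
  assoc_inv : forall a b c, hom (tens a (tens b c)) (tens (tens a b) c);
  assoc_iso1 : forall a b c, comp (assoc_inv a b c) (assoc a b c) = idm _;
  assoc_iso2 : forall a b c, comp (assoc a b c) (assoc_inv a b c) = idm _;
  assoc_nat : forall a b c a' b' c' (f : hom a a') (g : hom b b') (h : hom c c'),
      comp (assoc a' b' c') (tensm (tensm f g) h)
      = comp (tensm f (tensm g h)) (assoc a b c);
  lunit : forall a, hom (tens unit a) a;
  lunit_inv : forall a, hom a (tens unit a);
  lunit_iso1 : forall a, comp (lunit_inv a) (lunit a) = idm _;
  lunit_iso2 : forall a, comp (lunit a) (lunit_inv a) = idm _;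
  lunit_nat : forall a b (f : hom a b),
      comp (lunit b) (tensm (idm unit) f) = comp f (lunit a);
  runit : forall a, hom (tens a unit) a;
  runit_inv : forall a, hom a (tens a unit);
  runit_iso1 : forall a, comp (runit_inv a) (runit a) = idm _;
  runit_iso2 : forall a, comp (runit a) (runit_inv a) = idm _;
  runit_nat : forall a b (f : hom a b),
      comp (runit b) (tensm f (idm unit)) = comp f (runit a);
  pentagon : forall a b c d,
      comp (assoc a b (tens c d)) (assoc (tens a b) c d)
      = comp (tensm (idm a) (assoc b c d))
             (comp (assoc a (tens b c) d) (tensm (assoc a b c) (idm d)));
  triangle : forall a b,
      comp (tensm (idm a) (lunit b)) (assoc a unit b) = tensm (runit a) (idm b);
  sym : forall a b, hom (tens a b) (tens b a);
  sym_nat : forall a b a' b' (f : hom a a') (g : hom b b'),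
      comp (sym a' b') (tensm f g) = comp (tensm g f) (sym a b);
  sym_inv : forall a b, comp (sym b a) (sym a b) = idm _;
  hexagon : forall a b c,
      comp (assoc b c a) (comp (sym a (tens b c)) (assoc a b c))
      = comp (tensm (idm b) (sym a c))
             (comp (assoc b a c) (tensm (sym a b) (idm c)));
  ihom : ob -> ob -> ob;
  ev : forall a b, hom (tens (ihom a b) a) b;
  cur : forall {c a b : ob}, hom (tens c a) b -> hom c (ihom a b);
  ev_cur : forall c a b (f : hom (tens c a) b),
      comp (ev a b) (tensm (cur f) (idm a)) = f;
  cur_ev : forall c a b (g : hom c (ihom a b)),
      cur (comp (ev a b) (tensm g (idm a))) = g
}.

Arguments ob : clear implicits.
Arguments hom : clear implicits.
Arguments comp {_ _ _ _} _ _.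
Arguments idm {_} _.
Arguments tens {_} _ _.
Arguments tensm {_ _ _ _ _} _ _.
Arguments unit {_}.
Arguments assoc {_} _ _ _.
Arguments lunit {_} _.
Arguments runit {_} _.
Arguments sym {_} _ _.
Arguments ihom {_} _ _.
Arguments ev {_} _ _.
Arguments cur {_ _ _ _} _.

Declare Scope V_scope.
Open Scope V_scope.
Notation "g ∘ f" := (comp g f) (at level 40, left associativity) : V_scope.
Notation "a ⊗₀ b" := (tens a b) (at level 35, right associativity) : V_scope.
Notation "f ⊗₁ g" := (tensm f g) (at level 35, right associativity) : V_scope.

Section Enriched.
Variable V : CSMC.

Definition is_iso {a b : ob V} (f : hom V a b) : Prop :=
  exists g : hom V b a, g ∘ f = idm a /\ f ∘ g = idm b.

Definition is_mono {a b : ob V} (m : hom V a b) : Prop :=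
  forall c (f g : hom V c a), m ∘ f = m ∘ g -> f = g.

Definition is_epi {a b : ob V} (e : hom V a b) : Prop :=
  forall c (f g : hom V b c), f ∘ e = g ∘ e -> f = g.

(* strong monomorphism: a monomorphism with the unique (by monicity)
   diagonal fill-in property against every epimorphism *)
Definition strong_mono {x y : ob V} (m : hom V x y) : Prop :=
  is_mono m /\
  forall a b (e : hom V a b), is_epi e ->
    forall (u : hom V a x) (v : hom V b y), v ∘ e = m ∘ u ->
      exists d : hom V b x, d ∘ e = u /\ m ∘ d = v.

(* The underlying V-category \underline{V}: composition and identities. *)
Definition ulcomp (X Y Z : ob V) : hom V (ihom Y Z ⊗₀ ihom X Y) (ihom X Z) :=
  cur (ev Y Z ∘ (idm (ihom Y Z) ⊗₁ ev X Y) ∘ assoc (ihom Y Z) (ihom X Y) X).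

Definition ulid (X : ob V) : hom V unit (ihom X X) := cur (lunit X).

(* Raw V-categories (data); the axioms are the predicate is_VCat. *)
Record VCat := {
  vob : Type;
  vhom : vob -> vob -> ob V;
  vcomp : forall a b c, hom V (vhom b c ⊗₀ vhom a b) (vhom a c);
  vid : forall a, hom V unit (vhom a a)
}.
Arguments vhom : clear implicits.
Arguments vcomp : clear implicits.
Arguments vid : clear implicits.

Definition is_VCat (C : VCat) : Prop :=
  (forall a b c d,
      vcomp C a c d ∘ (idm _ ⊗₁ vcomp C a b c) ∘ assoc _ _ _
      = vcomp C a b d ∘ (vcomp C b c d ⊗₁ idm _)) /\
  (forall a b, vcomp C a b b ∘ (vid C b ⊗₁ idm _) = lunit _) /\
  (forall a b, vcomp C a a b ∘ (idm _ ⊗₁ vid C a) = runit _).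

Record VFun (C D : VCat) := {
  fob : vob C -> vob D;
  fhom : forall a b, hom V (vhom C a b) (vhom D (fob a) (fob b))
}.
Arguments fob {C D} _ _.
Arguments fhom {C D} _ _ _.

Definition is_VFunctor (C D : VCat) (F : VFun C D) : Prop :=
  (forall a b c, fhom F a c ∘ vcomp C a b c
                 = vcomp D _ _ _ ∘ (fhom F b c ⊗₁ fhom F a b)) /\
  (forall a, fhom F a a ∘ vid C a = vid D (fob F a)).

(* Cotensors [X, Cc] = Y with counit c : X → C(Y, Cc): the induced map
   C(Z, Y) → [X, C(Z, Cc)] is an isomorphism for every Z. *)
Definition cot_map (C : VCat) (X : ob V) (Cc Y : vob C)
    (c : hom V X (vhom C Y Cc)) (Z : vob C)
  : hom V (vhom C Z Y) (ihom X (vhom C Z Cc)) :=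
  cur (vcomp C Z Y Cc ∘ sym _ _ ∘ (idm (vhom C Z Y) ⊗₁ c)).

Definition is_cotensor (C : VCat) (X : ob V) (Cc Y : vob C)
    (c : hom V X (vhom C Y Cc)) : Prop :=
  forall Z, is_iso (cot_map c Z).

Definition wedge (C D : VCat) (F G : VFun C D) (X : ob V)
    (p : forall L, hom V X (vhom D (fob F L) (fob G L))) : Prop :=
  forall L L' : vob C,
    vcomp D (fob F L) (fob F L') (fob G L') ∘ (p L' ⊗₁ fhom F L L')
    = vcomp D (fob F L) (fob G L) (fob G L') ∘ (fhom G L L' ⊗₁ p L)
        ∘ sym X (vhom C L L').

(* (E, proj) is an end, with factorization map [factor] (only specified
   on wedges). *)
Definition is_end (C D : VCat) (F G : VFun C D) (E : ob V)
    (proj : forall L, hom V E (vhom D (fob F L) (fob G L)))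
    (factor : forall X, (forall L, hom V X (vhom D (fob F L) (fob G L))) ->
              hom V X E) : Prop :=
  wedge proj /\
  forall X q, wedge (X := X) q ->
    (forall L, proj L ∘ factor X q = q L) /\
    (forall h : hom V X E, (forall L, proj L ∘ h = q L) -> h = factor X q).

(* Systems of arities: full sub-V-category of \underline{V} on a class of
   objects containing I and closed under ⊗. *)
Record Arities := {
  ar : ob V -> Prop;
  ar_unit : ar unit;
  ar_tens : forall a b, ar a -> ar b -> ar (a ⊗₀ b)
}.
Arguments ar : clear implicits.

Variable S : Arities.

Definition Jobj : Type := { X : ob V | ar S X }.
Definition JI : Jobj := exist _ unit (ar_unit S).

(* J^op : J^op(J, K) = J(K, J) = [K, J] *)
Definition Jop : VCat := {|
  vob := Jobj;
  vhom := fun J K => ihom (proj1_sig K) (proj1_sig J);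
  vcomp := fun a b c => ulcomp (proj1_sig c) (proj1_sig b) (proj1_sig a) ∘ sym _ _;
  vid := fun a => ulid (proj1_sig a)
|}.

(* Raw J-theory data: a V-category with objects those of J, and the
   hom-components of the identity-on-objects V-functor τ : J^op → T. *)
Record JTh := {
  thom : Jobj -> Jobj -> ob V;
  tcomp : forall a b c, hom V (thom b c ⊗₀ thom a b) (thom a c);
  tid : forall a, hom V unit (thom a a);
  ttau : forall J K : Jobj, hom V (ihom (proj1_sig K) (proj1_sig J)) (thom J K)
}.
Arguments thom : clear implicits.
Arguments tcomp : clear implicits.
Arguments tid : clear implicits.
Arguments ttau : clear implicits.

Definition thCat (T : JTh) : VCat :=
  {| vob := Jobj; vhom := thom T; vcomp := tcomp T; vid := tid T |}.

Definition tauF (T : JTh) : VFun Jop (thCat T) :=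
  @Build_VFun Jop (thCat T) (fun x => x) (ttau T).

Definition is_Jtheory (T : JTh) : Prop :=
  is_VCat (thCat T) /\ is_VFunctor (tauF T) /\
  (forall (X Cc Y : Jobj) (c : hom V (proj1_sig X) (vhom Jop Y Cc)),
     is_cotensor (C := Jop) c ->
     is_cotensor (C := thCat T) (ttau T Y Cc ∘ c)).

(* Morphisms of J-theories: V-functors A with A τ = υ; in particular A is
   the identity on objects, so A is given by its hom-components. *)
Definition mkFun (T U : JTh) (A : forall J K, hom V (thom T J K) (thom U J K))
  : VFun (thCat T) (thCat U) := @Build_VFun (thCat T) (thCat U) (fun x => x) A.

Definition is_Jmorphism (T U : JTh)
    (A : forall J K, hom V (thom T J K) (thom U J K)) : Prop :=
  is_VFunctor (mkFun A) /\ (forall J K, A J K ∘ ttau T J K = ttau U J K).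

Definition castU {U : JTh} {X X' Y Y' : Jobj} (e1 : X = X') (e2 : Y = Y')
  : hom V (thom U X Y) (thom U X' Y') :=
  match e1 in _ = X1 return hom V (thom U X Y) (thom U X1 Y') with
  | eq_refl => match e2 in _ = Y1 return hom V (thom U X Y) (thom U X Y1) with
               | eq_refl => idm _ end
  end.

(* Designated cotensors [J, K] in U (with the inverses of the
   comparison isomorphisms as data) and [J, I] = J, [I, K] = K. *)
Record DesigCot (U : JTh) := {
  dcot : Jobj -> Jobj -> Jobj;
  dcounit : forall J K, hom V (proj1_sig J) (thom U (dcot J K) K);
  dinv : forall J K Z, hom V (ihom (proj1_sig J) (thom U Z K)) (thom U Z (dcot J K));
  dcot_JI : forall J, dcot J JI = J;
  dcot_IK : forall K, dcot JI K = K
}.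
Arguments dcot {U} _ _ _.
Arguments dcounit {U} _ _ _.
Arguments dinv {U} _ _ _ _.
Arguments dcot_JI {U} _ _.
Arguments dcot_IK {U} _ _.

Definition is_designated (U : JTh) (D : DesigCot U) : Prop :=
  (forall J K Z,
     dinv D J K Z ∘ cot_map (C := thCat U) (dcounit D J K) Z = idm _ /\
     cot_map (C := thCat U) (dcounit D J K) Z ∘ dinv D J K Z = idm _) /\
  (* [J, I] = J with the counit J ≅ [I, J] = J^op(J, I) → U(J, I) *)
  (forall J, castU (dcot_JI D J) eq_refl ∘ dcounit D J JI
             = ttau U J JI ∘ cur (runit (proj1_sig J))) /\
  (* [I, K] = K with counit the identity of K *)
  (forall K, castU (dcot_IK D K) eq_refl ∘ dcounit D JI K = tid U K).

(* The V-functor [J, -] : U → U on hom-objects. *)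
Definition cotf (U : JTh) (D : DesigCot U) (J K L : Jobj)
  : hom V (thom U K L) (thom U (dcot D J K) (dcot D J L)) :=
  dinv D J L (dcot D J K)
    ∘ cur (tcomp U (dcot D J K) K L ∘ (idm (thom U K L) ⊗₁ dcounit D J K)).

(* [J, A] = [J, -] ∘ A *)
Definition cotA (T U : JTh) (A : forall J K, hom V (thom T J K) (thom U J K))
    (D : DesigCot U) (J : Jobj) : VFun (thCat T) (thCat U) :=
  @Build_VFun (thCat T) (thCat U) (fun L => dcot D J L)
    (fun L L' => cotf D J L L' ∘ A L L').

(* The map J^op(J, K) = [K, J] → U([J, X], [K, X]) induced by cotensors. *)
Definition cotV (U : JTh) (D : DesigCot U) (J K X : Jobj)
  : hom V (ihom (proj1_sig K) (proj1_sig J)) (thom U (dcot D J X) (dcot D K X)) :=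
  dinv D K X (dcot D J X) ∘ cur (dcounit D J X ∘ ev (proj1_sig K) (proj1_sig J)).

(* Chosen ends T^⊥_A(J, K) = ∫_L U([J,A]L, [K,A]L). *)
Record CommEnds (U : JTh) (D : DesigCot U) := {
  cE : Jobj -> Jobj -> ob V;
  cproj : forall J K L, hom V (cE J K) (thom U (dcot D J L) (dcot D K L));
  cfactor : forall J K X,
      (forall L, hom V X (thom U (dcot D J L) (dcot D K L))) -> hom V X (cE J K)
}.
Arguments cE {U D} _ _ _.
Arguments cproj {U D} _ _ _ _.
Arguments cfactor {U D} _ _ _ _ _.

Definition is_commutant_ends (T U : JTh)
    (A : forall J K, hom V (thom T J K) (thom U J K))
    (D : DesigCot U) (E : CommEnds D) : Prop :=
  forall J K, is_end (F := cotA A D J) (G := cotA A D K)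
                     (cproj E J K) (cfactor E J K).

(* The commutant T^⊥_A: composition and identities of V-natural
   transformations, and J-theory structure induced by the cotensors. *)
Definition commutant (U : JTh) (D : DesigCot U) (E : CommEnds D) : JTh := {|
  thom := cE E;
  tcomp := fun J K M =>
    cfactor E J M (cE E K M ⊗₀ cE E J K)
      (fun L => tcomp U _ _ _ ∘ (cproj E K M L ⊗₁ cproj E J K L));
  tid := fun J => cfactor E J J unit (fun L => tid U (dcot D J L));
  ttau := fun J K => cfactor E J K _ (fun L => cotV D J K L)
|}.

Definition iota (U : JTh) (D : DesigCot U) (E : CommEnds D) (J K : Jobj)
  : hom V (cE E J K) (thom U J K) :=
  castU (dcot_JI D J) (dcot_JI D K) ∘ cproj E J K JI.

End Enriched.

(* The projection of the end [∫_L U([J,A]L, [K,A]L)] at [I] determines all the others: since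
   [[K, L]] is the iterated cotensor [[L, [K, I]]], the wedge condition evaluated at the counit
   [L → T(L, I)] of [L = [L, I]] (which [A] carries to [eps L]) writes the projection at [L] as
   the transpose of the projection at [I] along a bijective transposition. Hence [iota] is
   monic, and a diagonal fill-in against an epimorphism [e] is obtained by transposing
   componentwise; the components form a wedge because the wedge condition holds after
   precomposition with the epimorphism [e ⊗ 1]. That [iota] preserves composition, identities
   and [τ] is the factorization property of the end, read at [I], where [[J, I] = J]. *)

From Stdlib Require Import Utf8 IndefiniteDescription.

Section MonoidalFacts.
Context {V : CSMC}.

Lemma tensm_compl {a b c d e : ob V} (f : hom V a b) (g : hom V b c) (h : hom V d e) :
  (g ∘ f) ⊗₁ h = (g ⊗₁ h) ∘ (f ⊗₁ idm d).
Proof. rewrite <- tensm_comp, comp_idr. reflexivity. Qed.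

Lemma tensm_compr {a b c d e : ob V} (f : hom V a b) (g : hom V b c) (h : hom V d e) :
  h ⊗₁ (g ∘ f) = (h ⊗₁ g) ∘ (idm d ⊗₁ f).
Proof. rewrite <- tensm_comp, comp_idr. reflexivity. Qed.

Lemma tensm_compl_id {a b c d e : ob V} (f : hom V a b) (g : hom V b c) (h : hom V d e) :
  (g ∘ f) ⊗₁ h = (g ⊗₁ idm e) ∘ (f ⊗₁ h).
Proof. rewrite <- tensm_comp, comp_idl. reflexivity. Qed.

Lemma tensm_compr_id {a b c d e : ob V} (f : hom V a b) (g : hom V b c) (h : hom V d e) :
  h ⊗₁ (g ∘ f) = (idm e ⊗₁ g) ∘ (h ⊗₁ f).
Proof. rewrite <- tensm_comp, comp_idl. reflexivity. Qed.

Lemma split_mono_cancel {a b c : ob V} (r : hom V b a) (m : hom V a b) (x y : hom V c a) :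
  r ∘ m = idm a -> m ∘ x = m ∘ y -> x = y.
Proof.
  intros Hrm E.
  rewrite <- (comp_idl x), <- (comp_idl y), <- Hrm, <- !comp_assoc, E. reflexivity.
Qed.

Lemma split_epi_cancel {a b c : ob V} (r : hom V b a) (m : hom V a b) (x y : hom V a c) :
  r ∘ m = idm a -> x ∘ r = y ∘ r -> x = y.
Proof.
  intros Hrm E.
  rewrite <- (comp_idr x), <- (comp_idr y), <- Hrm, !comp_assoc, E. reflexivity.
Qed.

Lemma iso_cancel {a b c : ob V} (s : hom V a b) (x y : hom V b c) :
  is_iso s -> x ∘ s = y ∘ s -> x = y.
Proof. intros [s' [_ Hss']]. exact (split_epi_cancel s s' x y Hss'). Qed.

Lemma iso_comp {a b c : ob V} (f : hom V a b) (g : hom V b c) :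
  is_iso f -> is_iso g -> is_iso (g ∘ f).
Proof.
  intros [f' [F1 F2]] [g' [G1 G2]]. exists (f' ∘ g'). split.
  - rewrite <- comp_assoc, (comp_assoc f g g'), G1, comp_idl. exact F1.
  - rewrite <- comp_assoc, (comp_assoc g' f' f), F2, comp_idl. exact G2.
Qed.

Lemma iso_sym (a b : ob V) : is_iso (sym a b).
Proof. exists (sym b a). split; apply sym_inv. Qed.

Lemma iso_assoc (a b c : ob V) : is_iso (assoc a b c).
Proof. exists (assoc_inv a b c). split; [apply assoc_iso1 | apply assoc_iso2]. Qed.

Lemma iso_assoc_inv (a b c : ob V) : is_iso (assoc_inv a b c).
Proof. exists (assoc a b c). split; [apply assoc_iso2 | apply assoc_iso1]. Qed.

Lemma iso_tensm {a b c d : ob V} (f : hom V a b) (g : hom V c d) :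
  is_iso f -> is_iso g -> is_iso (f ⊗₁ g).
Proof.
  intros [f' [F1 F2]] [g' [G1 G2]]. exists (f' ⊗₁ g').
  split; rewrite <- tensm_comp, ?F1, ?F2, ?G1, ?G2; apply tensm_id.
Qed.

Lemma iso_idm (a : ob V) : is_iso (idm a).
Proof. exists (idm a). split; apply comp_idl. Qed.

Lemma tensm_unit_inj {a b : ob V} (f g : hom V a b) :
  f ⊗₁ idm unit = g ⊗₁ idm unit -> f = g.
Proof.
  intro E. apply (split_epi_cancel (runit a) (runit_inv a)); [apply runit_iso2 |].
  rewrite <- !runit_nat, E. reflexivity.
Qed.

Lemma unit_tensm_inj {a b : ob V} (f g : hom V a b) :
  idm unit ⊗₁ f = idm unit ⊗₁ g -> f = g.
Proof.
  intro E. apply (split_epi_cancel (lunit a) (lunit_inv a)); [apply lunit_iso2 |].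
  rewrite <- !lunit_nat, E. reflexivity.
Qed.

Lemma runit_tens (a b : ob V) : runit (a ⊗₀ b) = (idm a ⊗₁ runit b) ∘ assoc a b unit.
Proof.
  apply tensm_unit_inj.
  apply (split_mono_cancel (assoc_inv _ _ _) (assoc a b unit)); [apply assoc_iso1 |].
  assert (E : assoc a b unit ∘ (runit (a ⊗₀ b) ⊗₁ idm unit)
     = (idm a ⊗₁ (idm b ⊗₁ lunit unit)) ∘ assoc a b (unit ⊗₀ unit)
       ∘ assoc (a ⊗₀ b) unit unit).
  { rewrite <- triangle, comp_assoc, <- tensm_id, assoc_nat. reflexivity. }
  rewrite E, <- comp_assoc, pentagon, !comp_assoc, <- tensm_comp, comp_idl, <- comp_assoc,
    triangle, comp_assoc, <- assoc_nat, <- comp_assoc, <- tensm_comp, comp_idl.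
  reflexivity.
Qed.

Lemma lunit_tens (a b : ob V) : lunit (a ⊗₀ b) ∘ assoc unit a b = lunit a ⊗₁ idm b.
Proof.
  apply unit_tensm_inj.
  assert (E : (idm unit ⊗₁ (lunit (a ⊗₀ b) ∘ assoc unit a b)) ∘ assoc unit (unit ⊗₀ a) b
              ∘ (assoc unit unit a ⊗₁ idm b)
            = (idm unit ⊗₁ (lunit a ⊗₁ idm b)) ∘ assoc unit (unit ⊗₀ a) b
              ∘ (assoc unit unit a ⊗₁ idm b)).
  { rewrite tensm_compr, <- !comp_assoc, <- pentagon, comp_assoc, triangle,
      <- (tensm_id a b), <- assoc_nat, <- triangle, tensm_compl, !comp_assoc,
      <- (assoc_nat (idm unit) (lunit a) (idm b)).
    reflexivity. }
  assert (Hiso : (assoc unit unit a ⊗₁ idm b) ∘ (assoc_inv unit unit a ⊗₁ idm b) = idm _).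
  { rewrite <- tensm_comp, assoc_iso2, comp_idl. apply tensm_id. }
  apply (split_epi_cancel _ _ _ _ Hiso) in E.
  exact (split_epi_cancel _ _ _ _ (assoc_iso2 _ _ _) E).
Qed.

Lemma runit_sym (x : ob V) : runit x ∘ sym unit x = lunit x.
Proof.
  assert (Hr : runit x = lunit x ∘ sym x unit).
  { apply tensm_unit_inj.
    apply (split_mono_cancel (sym unit x) (sym x unit)); [apply sym_inv |].
    assert (H := hexagon x unit unit).
    apply (f_equal (fun k => lunit (unit ⊗₀ x) ∘ k)) in H.
    rewrite !comp_assoc, lunit_tens, <- sym_nat, <- comp_assoc, triangle, lunit_nat,
      <- (comp_assoc (assoc _ _ _)), lunit_tens in H.
    rewrite H, <- comp_assoc, <- tensm_comp, comp_idl. reflexivity. }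
  rewrite Hr, <- comp_assoc, sym_inv, comp_idr. reflexivity.
Qed.

Lemma sym_tensl (a b c : ob V) : sym (a ⊗₀ b) c =
  assoc c a b ∘ (sym a c ⊗₁ idm b) ∘ assoc_inv a c b ∘ (idm a ⊗₁ sym b c) ∘ assoc a b c.
Proof.
  set (R := assoc c a b ∘ (sym a c ⊗₁ idm b) ∘ assoc_inv a c b ∘ (idm a ⊗₁ sym b c)
            ∘ assoc a b c).
  assert (Hhex : assoc a b c ∘ sym c (a ⊗₀ b) =
     (idm a ⊗₁ sym c b) ∘ assoc a c b ∘ (sym c a ⊗₁ idm b) ∘ assoc_inv c a b).
  { rewrite <- (comp_idr (assoc a b c ∘ sym c (a ⊗₀ b))), <- (assoc_iso2 c a b),
      comp_assoc, <- (comp_assoc (assoc c a b)), hexagon, !comp_assoc.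
    reflexivity. }
  assert (HR : R ∘ sym c (a ⊗₀ b) = idm _).
  { unfold R. rewrite <- comp_assoc, Hhex, !comp_assoc,
      <- (comp_assoc (idm a ⊗₁ sym c b)), <- tensm_comp, sym_inv, comp_idl, tensm_id,
      comp_idr, <- (comp_assoc (assoc a c b)), assoc_iso1, comp_idr,
      <- (comp_assoc (sym c a ⊗₁ idm b)), <- tensm_comp, sym_inv, comp_idl, tensm_id,
      comp_idr.
    apply assoc_iso2. }
  rewrite <- (comp_idl (sym (a ⊗₀ b) c)), <- HR, <- comp_assoc, sym_inv, comp_idr.
  reflexivity.
Qed.

Lemma sym_assoc_braid (a b c : ob V) :
  sym (a ⊗₀ b) c ∘ (assoc_inv a b c ∘ sym (b ⊗₀ c) a) =
  assoc c a b ∘ ((sym a c ⊗₁ idm b) ∘ (assoc_inv a c b ∘ (sym (c ⊗₀ b) a ∘ (sym b c ⊗₁ idm a)))).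
Proof.
  rewrite sym_tensl, sym_nat, <- !comp_assoc.
  do 4 f_equal. rewrite comp_assoc, assoc_iso2, comp_idl. reflexivity.
Qed.

Lemma cur_comp {a b c d : ob V} (f : hom V (b ⊗₀ a) c) (g : hom V d b) :
  cur f ∘ g = cur (f ∘ (g ⊗₁ idm a)).
Proof.
  rewrite <- (cur_ev (cur f ∘ g)). f_equal. rewrite tensm_compl, comp_assoc, ev_cur.
  reflexivity.
Qed.

Lemma cur_inj {a b c : ob V} (f g : hom V (c ⊗₀ a) b) : cur f = cur g -> f = g.
Proof. intro E. rewrite <- (ev_cur f), <- (ev_cur g), E. reflexivity. Qed.

Lemma epi_tensm_idm {a b : ob V} (e : hom V a b) (c : ob V) :
  is_epi e -> is_epi (e ⊗₁ idm c).
Proof. intros He d f g E. apply cur_inj, He. rewrite !cur_comp, E. reflexivity. Qed.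

Lemma ulcomp_runit (b c : ob V) :
  ulcomp unit b c ∘ (idm _ ⊗₁ cur (runit b)) = cur (runit c) ∘ ev b c.
Proof.
  unfold ulcomp. rewrite !cur_comp. f_equal.
  rewrite <- comp_assoc, assoc_nat, comp_assoc, <- (comp_assoc _ (idm _ ⊗₁ ev _ _)),
    <- tensm_comp, comp_idl, ev_cur, <- comp_assoc, <- runit_tens, runit_nat.
  reflexivity.
Qed.

End MonoidalFacts.

Section GeneralizedComposition.
Context {V : CSMC} {S : Arities V} {U : JTh S}.
Notation Ob := (Jobj S).
Notation H a b := (thom U a b).

Definition gcomp {a b c : Ob} {W1 W2 : ob V} (x : hom V W1 (H b c)) (y : hom V W2 (H a b))
  : hom V (W1 ⊗₀ W2) (H a c) := tcomp U a b c ∘ (x ⊗₁ y).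

Lemma gcomp_tensm {a b c : Ob} {W1 W2 W1' W2' : ob V} (x : hom V W1 (H b c))
  (y : hom V W2 (H a b)) (f : hom V W1' W1) (g : hom V W2' W2) :
  gcomp (x ∘ f) (y ∘ g) = gcomp x y ∘ (f ⊗₁ g).
Proof. unfold gcomp. rewrite tensm_comp, comp_assoc. reflexivity. Qed.

Lemma gcomp_compl {a b c : Ob} {W1 W2 W1' : ob V} (x : hom V W1 (H b c))
  (y : hom V W2 (H a b)) (f : hom V W1' W1) :
  gcomp (x ∘ f) y = gcomp x y ∘ (f ⊗₁ idm _).
Proof. rewrite <- gcomp_tensm, comp_idr. reflexivity. Qed.

Lemma gcomp_compr {a b c : Ob} {W1 W2 W2' : ob V} (x : hom V W1 (H b c))
  (y : hom V W2 (H a b)) (g : hom V W2' W2) :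
  gcomp x (y ∘ g) = gcomp x y ∘ (idm _ ⊗₁ g).
Proof. rewrite <- gcomp_tensm, comp_idr. reflexivity. Qed.

Lemma castU_gcomp {a a' b b' c c' : Ob} (e1 : a = a') (e2 : b = b') (e3 : c = c')
  {W1 W2 : ob V} (x : hom V W1 (H b c)) (y : hom V W2 (H a b)) :
  castU e1 e3 ∘ gcomp x y = gcomp (castU e2 e3 ∘ x) (castU e1 e2 ∘ y).
Proof. destruct e1, e2, e3. simpl. rewrite !comp_idl. reflexivity. Qed.

Lemma castU_tid {a a' : Ob} (e : a = a') : castU e e ∘ tid U a = tid U a'.
Proof. destruct e. apply comp_idl. Qed.

Lemma castU_symK {a a' b b' : Ob} (e1 : a = a') (e2 : b = b') :
  castU (U := U) (eq_sym e1) (eq_sym e2) ∘ castU e1 e2 = idm _.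
Proof. destruct e1, e2. apply comp_idl. Qed.

Lemma castUK {a a' b b' : Ob} (e1 : a = a') (e2 : b = b') :
  castU (U := U) e1 e2 ∘ castU (eq_sym e1) (eq_sym e2) = idm _.
Proof. destruct e1, e2. apply comp_idl. Qed.

Hypothesis HUcat : is_VCat (thCat U).

Lemma gcompA {a b c d : Ob} {W1 W2 W3 : ob V} (x : hom V W1 (H c d))
  (y : hom V W2 (H b c)) (z : hom V W3 (H a b)) :
  gcomp (gcomp x y) z = gcomp x (gcomp y z) ∘ assoc _ _ _.
Proof.
  destruct HUcat as [Hassoc _]. unfold gcomp. simpl in Hassoc.
  rewrite tensm_compl_id, comp_assoc, <- Hassoc, <- !comp_assoc. f_equal.
  rewrite tensm_compr_id, <- !comp_assoc, assoc_nat. reflexivity.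
Qed.

Lemma gcompA' {a b c d : Ob} {W1 W2 W3 : ob V} (x : hom V W1 (H c d))
  (y : hom V W2 (H b c)) (z : hom V W3 (H a b)) :
  gcomp x (gcomp y z) = gcomp (gcomp x y) z ∘ assoc_inv _ _ _.
Proof. rewrite gcompA, <- comp_assoc, assoc_iso2, comp_idr. reflexivity. Qed.

Lemma gcomp_tidl {a b : Ob} {W : ob V} (x : hom V W (H a b)) :
  gcomp (tid U b) x = x ∘ lunit _.
Proof.
  destruct HUcat as [_ [Hl _]]. unfold gcomp. simpl in Hl.
  rewrite <- (comp_idr (tid U b)), <- (comp_idl x), tensm_comp, comp_assoc, Hl,
    comp_idl, lunit_nat.
  reflexivity.
Qed.

Lemma gcomp_tidr {a b : Ob} {W : ob V} (x : hom V W (H a b)) :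
  gcomp x (tid U a) = x ∘ runit _.
Proof.
  destruct HUcat as [_ [_ Hr]]. unfold gcomp. simpl in Hr.
  rewrite <- (comp_idr (tid U a)), <- (comp_idl x), tensm_comp, comp_assoc, Hr,
    comp_idl, runit_nat.
  reflexivity.
Qed.

Lemma gcomp_square_paste {x0 x1 x2 y0 y1 y2 : Ob} {X1 X2 C : ob V}
  (a' : hom V X1 (H y1 y2)) (b' : hom V X2 (H y0 y1))
  (a : hom V X1 (H x1 x2)) (b : hom V X2 (H x0 x1))
  (f0 : hom V C (H x0 y0)) (f1 : hom V C (H x1 y1)) (f2 : hom V C (H x2 y2)) :
  gcomp b' f0 = gcomp f1 b ∘ sym X2 C -> gcomp a' f1 = gcomp f2 a ∘ sym X1 C ->
  gcomp (gcomp a' b') f0 = gcomp f2 (gcomp a b) ∘ sym (X1 ⊗₀ X2) C.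
Proof.
  intros Hb Ha.
  rewrite gcompA, Hb, gcomp_compr, gcompA', Ha, gcomp_compl, gcompA, sym_tensl,
    !comp_assoc.
  reflexivity.
Qed.

Lemma tid_square {x y : Ob} {C : ob V} (f : hom V C (H x y)) :
  gcomp (tid U y) f = gcomp f (tid U x) ∘ sym unit C.
Proof. rewrite gcomp_tidl, gcomp_tidr, <- comp_assoc, runit_sym. reflexivity. Qed.

End GeneralizedComposition.

Section Cotensors.
Context {V : CSMC} {S : Arities V} {U : JTh S}.
Notation Ob := (Jobj S).
Notation H a b := (thom U a b).

Definition cotr {X : ob V} {Z Y C : Ob} {W : ob V} (c : hom V X (H Y C))
  (h : hom V W (H Z Y)) : hom V (W ⊗₀ X) (H Z C) :=
  tcomp U Z Y C ∘ sym _ _ ∘ (h ⊗₁ c).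

Lemma cotr_gcomp {X : ob V} {Z Y C : Ob} {W : ob V} (c : hom V X (H Y C))
  (h : hom V W (H Z Y)) : cotr c h = gcomp c h ∘ sym W X.
Proof. unfold cotr, gcomp. rewrite <- comp_assoc, sym_nat, comp_assoc. reflexivity. Qed.

Lemma gcomp_cotr {X : ob V} {Z Y C : Ob} {W : ob V} (c : hom V X (H Y C))
  (h : hom V W (H Z Y)) : gcomp c h = cotr c h ∘ sym X W.
Proof. rewrite cotr_gcomp, <- comp_assoc, sym_inv, comp_idr. reflexivity. Qed.

Lemma cotr_comp {X : ob V} {Z Y C : Ob} {W W' : ob V} (c : hom V X (H Y C))
  (h : hom V W (H Z Y)) (f : hom V W' W) :
  cotr c (h ∘ f) = cotr c h ∘ (f ⊗₁ idm X).
Proof. unfold cotr. rewrite tensm_compl, comp_assoc. reflexivity. Qed.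

Lemma cot_map_cotr {X : ob V} {Z Y C : Ob} {W : ob V} (c : hom V X (H Y C))
  (h : hom V W (H Z Y)) : cot_map (C := thCat U) c Z ∘ h = cur (cotr c h).
Proof.
  unfold cot_map, cotr. simpl.
  rewrite cur_comp, <- comp_assoc, <- tensm_comp, comp_idl, comp_idr. reflexivity.
Qed.

Lemma castU_cotr {X : ob V} {Z Z' Y Y' C C' : Ob} {W : ob V} (e1 : Z = Z') (e2 : Y = Y')
  (e3 : C = C') (c : hom V X (H Y C)) (h : hom V W (H Z Y)) :
  cotr (castU e2 e3 ∘ c) (castU e1 e2 ∘ h) = castU e1 e3 ∘ cotr c h.
Proof. destruct e1, e2, e3. simpl. rewrite !comp_idl. reflexivity. Qed.

Lemma castU_cotensor {X : ob V} {Y Y' C C' : Ob} (e2 : Y = Y') (e3 : C = C')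
  (c : hom V X (H Y C)) :
  is_cotensor (C := thCat U) c -> is_cotensor (C := thCat U) (castU e2 e3 ∘ c).
Proof. destruct e2, e3. simpl. rewrite comp_idl. auto. Qed.

Definition transpose_bij {X : ob V} {Y C : Ob} (c : hom V X (H Y C)) : Prop :=
  forall (Z : Ob) (W : ob V),
    (forall h1 h2 : hom V W (H Z Y), cotr c h1 = cotr c h2 -> h1 = h2) /\
    (forall φ : hom V (W ⊗₀ X) (H Z C), exists h, cotr c h = φ).

Lemma cotensor_transpose_bij {X : ob V} {Y C : Ob} (c : hom V X (H Y C)) :
  is_cotensor (C := thCat U) c -> transpose_bij c.
Proof.
  intros Hc Z W. destruct (Hc Z) as [g [Hg1 Hg2]]. split.
  - intros h1 h2 E. apply (split_mono_cancel g (cot_map (C := thCat U) c Z)); [exact Hg1 |].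
    rewrite !cot_map_cotr, E. reflexivity.
  - intros φ. exists (g ∘ cur φ). apply cur_inj.
    rewrite <- cot_map_cotr, comp_assoc, Hg2, comp_idl. reflexivity.
Qed.

End Cotensors.

Section DesignatedCotensors.
Context {V : CSMC} {S : Arities V} {U : JTh S}.
Notation Ob := (Jobj S).
Notation I := (JI S).
Notation H a b := (thom U a b).
Variable D : DesigCot U.
Hypothesis HD : is_designated D.

Lemma dcounit_cotensor (J K : Ob) : is_cotensor (C := thCat U) (dcounit D J K).
Proof.
  intro Z. destruct HD as [Hinv _]. exists (dinv D J K Z). apply Hinv.
Qed.

Lemma cotr_dinv (J K Z : Ob) {W : ob V} (x : hom V W (ihom (proj1_sig J) (H Z K))) :
  cotr (dcounit D J K) (dinv D J K Z ∘ x) = ev _ _ ∘ (x ⊗₁ idm _).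
Proof.
  apply cur_inj. destruct HD as [Hinv _]. destruct (Hinv J K Z) as [_ Hinv2].
  rewrite <- cot_map_cotr, cur_ev, comp_assoc. simpl in *. rewrite Hinv2, comp_idl.
  reflexivity.
Qed.

Lemma cotr_cotf (J K L : Ob) {W : ob V} (g : hom V W (H K L)) :
  cotr (dcounit D J L) (cotf D J K L ∘ g) = gcomp g (dcounit D J K).
Proof.
  unfold cotf. rewrite <- comp_assoc, cotr_dinv, tensm_compl, comp_assoc, ev_cur,
    <- comp_assoc, <- tensm_comp, comp_idl, comp_idr.
  reflexivity.
Qed.

Lemma cotr_cotf_idm (J K L : Ob) :
  cotr (dcounit D J L) (cotf D J K L) = gcomp (idm _) (dcounit D J K).
Proof. rewrite <- (comp_idr (cotf D J K L)), cotr_cotf. reflexivity. Qed.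

Lemma cotr_cotV (J K X : Ob) {W : ob V} (h : hom V W (ihom (proj1_sig K) (proj1_sig J))) :
  cotr (dcounit D K X) (cotV D J K X ∘ h) = dcounit D J X ∘ ev _ _ ∘ (h ⊗₁ idm _).
Proof.
  unfold cotV. rewrite <- comp_assoc, cotr_dinv, tensm_compl, comp_assoc, ev_cur.
  reflexivity.
Qed.

Lemma cotr_cotV_idm (J K X : Ob) :
  cotr (dcounit D K X) (cotV D J K X) = dcounit D J X ∘ ev _ _.
Proof. rewrite <- (comp_idr (cotV D J K X)), cotr_cotV, tensm_id, comp_idr. reflexivity. Qed.

(* The counit [L ≅ [I, L] → U(L, I)] exhibiting [L] as the cotensor [L, I] in [U]. *)
Definition eps (L : Ob) : hom V (proj1_sig L) (H L I) :=
  ttau U L I ∘ cur (runit (proj1_sig L)).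

Lemma castU_dcounit_JI (L : Ob) : castU (dcot_JI D L) eq_refl ∘ dcounit D L I = eps L.
Proof. destruct HD as [_ [Hcot_JI _]]. apply Hcot_JI. Qed.

Lemma eps_cotensor (L : Ob) : is_cotensor (C := thCat U) (eps L).
Proof.
  rewrite <- castU_dcounit_JI. apply castU_cotensor, dcounit_cotensor.
Qed.

Lemma castU_cotV_unit (HUtau : is_VFunctor (tauF U)) (J K : Ob) :
  castU (dcot_JI D J) (dcot_JI D K) ∘ cotV D J K I = ttau U J K.
Proof.
  destruct (cotensor_transpose_bij _ (eps_cotensor K) J
              (ihom (proj1_sig K) (proj1_sig J))) as [Hinj _].
  destruct HUtau as [Htau_comp _]. simpl in Htau_comp.
  apply Hinj.
  rewrite <- (castU_dcounit_JI K), castU_cotr, (castU_dcounit_JI K),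
    <- (comp_idr (cotV D J K I)), cotr_cotV, tensm_id, comp_idr, comp_assoc,
    (castU_dcounit_JI J), cotr_gcomp.
  unfold eps, gcomp.
  rewrite tensm_compl, comp_assoc, <- Htau_comp, <- !comp_assoc. f_equal.
  rewrite !comp_assoc, <- (comp_assoc (_ ⊗₁ _) (sym _ _) (ulcomp _ _ _)), sym_nat,
    comp_assoc, <- comp_assoc, sym_inv, comp_idr.
  symmetry. apply ulcomp_runit.
Qed.

Hypothesis HUcat : is_VCat (thCat U).

Lemma cotV_square (J K L L' : Ob) {C : ob V} (g : hom V C (H L L')) :
  gcomp (cotV D J K L') (cotf D J L L' ∘ g)
  = gcomp (cotf D K L L' ∘ g) (cotV D J K L) ∘ sym _ C.
Proof.
  destruct (cotensor_transpose_bij _ (dcounit_cotensor K L') (dcot D J L)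
              (ihom (proj1_sig K) (proj1_sig J) ⊗₀ C)) as [Hinj _].
  apply Hinj.
  rewrite (cotr_comp _ _ (sym _ _)), !cotr_gcomp, !(gcompA' HUcat),
    (gcomp_cotr (dcounit D K L') (cotV D J K L')), cotr_cotV_idm,
    (gcomp_cotr (dcounit D K L') (cotf D K L L' ∘ g)), cotr_cotf,
    <- (comp_assoc (sym _ _) (ev _ _) (dcounit D J L')), gcomp_tensm,
    (gcomp_cotr (dcounit D J L') (cotf D J L L')), cotr_cotf_idm, gcomp_compl, (gcompA HUcat),
    (gcomp_cotr (dcounit D K L) (cotV D J K L)), cotr_cotV_idm,
    <- (comp_assoc (_ ⊗₁ g) (sym _ _)), sym_nat, comp_assoc, <- gcomp_tensm, comp_idl,
    !gcomp_compr, !tensm_compr, <- !comp_assoc.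
  do 3 f_equal. apply sym_assoc_braid.
Qed.

End DesignatedCotensors.

Section IteratedCotensor.
Context {V : CSMC} {S : Arities V} {U : JTh S}.
Notation Ob := (Jobj S).
Notation I := (JI S).
Notation H a b := (thom U a b).
Variable D : DesigCot U.
Hypothesis HD : is_designated D.
Hypothesis HUcat : is_VCat (thCat U).

(* Applying [[K, -]] to the counit of [L = [L, I]] exhibits [[K, L]] as [[L, [K, I]]]. *)
Definition cotf_eps (K L : Ob) : hom V (proj1_sig L) (H (dcot D K L) (dcot D K I)) :=
  cotf D K L I ∘ eps L.

Lemma cotr_cotr_cotf_eps (K L Z : Ob) {W : ob V} (h : hom V W (H Z (dcot D K L))) :
  cotr (dcounit D K I) (cotr (cotf_eps K L) h)
  = gcomp (eps L) (gcomp (dcounit D K L) h)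
    ∘ (assoc _ _ W ∘ (sym (proj1_sig K) (proj1_sig L) ⊗₁ idm W) ∘ assoc_inv _ _ W
       ∘ (idm _ ⊗₁ sym W (proj1_sig L)) ∘ sym (W ⊗₀ proj1_sig L) (proj1_sig K)).
Proof.
  unfold cotf_eps.
  rewrite !cotr_gcomp, gcomp_compr, (gcompA' HUcat), (gcomp_compr (dcounit D K I)),
    (gcomp_cotr (dcounit D K I) (cotf D K L I)), (cotr_cotf_idm D HD),
    <- (comp_assoc (idm _ ⊗₁ eps L) (sym _ _)), sym_nat, comp_assoc, <- gcomp_tensm,
    comp_idl, comp_idr, gcomp_compl, (gcompA HUcat), !comp_assoc.
  reflexivity.
Qed.

Lemma cotr_cotr_eps (K L Z : Ob) {W : ob V} (h : hom V W (H Z (dcot D K L))) :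
  cotr (eps L) (cotr (dcounit D K L) h)
  = gcomp (eps L) (gcomp (dcounit D K L) h)
    ∘ ((idm _ ⊗₁ sym W (proj1_sig K)) ∘ sym (W ⊗₀ proj1_sig K) (proj1_sig L)).
Proof. rewrite !cotr_gcomp, gcomp_compr, comp_assoc. reflexivity. Qed.

Lemma cotf_eps_transpose_bij (K L : Ob) : transpose_bij (cotf_eps K L).
Proof.
  (* Transposing along [cotf_eps K L] and then [dcounit D K I] agrees, up to an isomorphism,
     with transposing along [dcounit D K L] and then [eps L]; the latter is bijective. *)
  intros Z W.
  destruct (cotensor_transpose_bij _ (dcounit_cotensor D HD K L) Z W) as [B1i B1s].
  destruct (cotensor_transpose_bij _ (eps_cotensor D HD L) Z (W ⊗₀ proj1_sig K))
    as [B2i B2s].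
  destruct (cotensor_transpose_bij _ (dcounit_cotensor D HD K I) Z (W ⊗₀ proj1_sig L))
    as [B3i B3s].
  assert (Ha : is_iso (assoc (proj1_sig L) (proj1_sig K) W
      ∘ (sym (proj1_sig K) (proj1_sig L) ⊗₁ idm W) ∘ assoc_inv _ _ W
      ∘ (idm _ ⊗₁ sym W (proj1_sig L)) ∘ sym (W ⊗₀ proj1_sig L) (proj1_sig K))).
  { repeat apply iso_comp;
      auto using iso_assoc, iso_assoc_inv, iso_tensm, iso_idm, iso_sym. }
  assert (Hb : is_iso ((idm _ ⊗₁ sym W (proj1_sig K))
                       ∘ sym (W ⊗₀ proj1_sig K) (proj1_sig L))).
  { apply iso_comp; auto using iso_tensm, iso_idm, iso_sym. }
  split.
  - intros h1 h2 E. apply B1i, B2i. rewrite !cotr_cotr_eps. f_equal.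
    apply (iso_cancel _ _ _ Ha). rewrite <- !cotr_cotr_cotf_eps, E. reflexivity.
  - intros φ. destruct Ha as [a' [Ha1 _]].
    destruct (B2s (cotr (dcounit D K I) φ ∘ a' ∘
                   ((idm _ ⊗₁ sym W (proj1_sig K)) ∘ sym (W ⊗₀ proj1_sig K) (proj1_sig L))))
      as [k Hk].
    destruct (B1s k) as [h Hh]. exists h. apply B3i.
    assert (E : gcomp (eps L) (gcomp (dcounit D K L) h) = cotr (dcounit D K I) φ ∘ a').
    { apply (iso_cancel _ _ _ Hb). rewrite <- cotr_cotr_eps, Hh, Hk. reflexivity. }
    rewrite cotr_cotr_cotf_eps, E, <- comp_assoc, Ha1, comp_idr. reflexivity.
Qed.

End IteratedCotensor.

Section Commutant.
Context {V : CSMC} {S : Arities V} {T U : JTh S}.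
Notation Ob := (Jobj S).
Notation I := (JI S).
Notation H a b := (thom U a b).
Variable A : forall J K : Ob, hom V (thom T J K) (thom U J K).
Variable D : DesigCot U.
Variable E : CommEnds D.
Notation π := (cproj E).

(* [wedge] for [[J, A] ⇒ [K, A]], written with [gcomp]; the two are convertible. *)
Definition gwedge (J K : Ob) {X : ob V} (p : forall L, hom V X (H (dcot D J L) (dcot D K L)))
  : Prop :=
  forall L L' : Ob, gcomp (p L') (cotf D J L L' ∘ A L L')
                    = gcomp (cotf D K L L' ∘ A L L') (p L) ∘ sym X (thom T L L').

Lemma gwedge_precomp (J K : Ob) {X Y : ob V}
  (p : forall L, hom V X (H (dcot D J L) (dcot D K L))) (h : hom V Y X) :
  gwedge J K p -> gwedge J K (fun L => p L ∘ h).
Proof.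
  intros Hp L L'.
  rewrite gcomp_compl, Hp, gcomp_compr, <- !comp_assoc, sym_nat. reflexivity.
Qed.

Lemma gwedge_epi_descent (J K : Ob) {X Y : ob V} (e : hom V X Y)
  (p : forall L, hom V X (H (dcot D J L) (dcot D K L)))
  (q : forall L, hom V Y (H (dcot D J L) (dcot D K L))) :
  is_epi e -> gwedge J K p -> (forall L, q L ∘ e = p L) -> gwedge J K q.
Proof.
  intros He Hp Hqp L L'. apply (epi_tensm_idm e _ He).
  rewrite <- gcomp_compl, Hqp, <- (comp_assoc (e ⊗₁ _) (sym _ _)), sym_nat,
    (comp_assoc (sym _ _) (_ ⊗₁ e)), <- gcomp_compr, Hqp.
  apply Hp.
Qed.

Hypothesis HE : is_commutant_ends A E.

Lemma end_proj_gwedge (J K : Ob) : gwedge J K (π J K).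
Proof. exact (proj1 (HE J K)). Qed.

Lemma end_factor_proj (J K : Ob) {X : ob V}
  (q : forall L, hom V X (H (dcot D J L) (dcot D K L))) :
  gwedge J K q -> forall L, π J K L ∘ cfactor E q = q L.
Proof. intros Hq. exact (proj1 (proj2 (HE J K) X q Hq)). Qed.

Lemma end_hom_ext (J K : Ob) {X : ob V} (f g : hom V X (cE E J K)) :
  (forall L, π J K L ∘ f = π J K L ∘ g) -> f = g.
Proof.
  intros Hfg.
  destruct (proj2 (HE J K) X _ (gwedge_precomp J K _ g (end_proj_gwedge J K))) as [_ Huniq].
  rewrite (Huniq f Hfg). symmetry. exact (Huniq g (fun L => eq_refl)).
Qed.

Hypothesis HUcat : is_VCat (thCat U).
Hypothesis HD : is_designated D.

Lemma comp_gwedge (J K M : Ob) : gwedge J M (fun L => gcomp (π K M L) (π J K L)).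
Proof.
  intros L L'.
  apply (gcomp_square_paste HUcat) with (f1 := cotf D K L L' ∘ A L L');
    apply end_proj_gwedge.
Qed.

Lemma tid_gwedge (J : Ob) : gwedge J J (fun L => tid U (dcot D J L)).
Proof. intros L L'. apply (tid_square HUcat). Qed.

Lemma cotV_gwedge (J K : Ob) : gwedge J K (fun L => cotV D J K L).
Proof. intros L L'. apply (cotV_square D HD HUcat). Qed.

Lemma iota_is_Jmorphism (HUtau : is_VFunctor (tauF U)) :
  is_Jmorphism (T := commutant E) (U := U) (iota E).
Proof.
  split; [split |].
  - intros J K M. simpl. unfold iota.
    rewrite <- comp_assoc, (end_factor_proj J M _ (comp_gwedge J K M)),
      (castU_gcomp _ (dcot_JI D K)).
    reflexivity.
  - intros J. simpl. unfold iota.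
    rewrite <- comp_assoc, (end_factor_proj J J _ (tid_gwedge J)). apply castU_tid.
  - intros J K. simpl. unfold iota.
    rewrite <- comp_assoc, (end_factor_proj J K _ (cotV_gwedge J K)).
    apply (castU_cotV_unit D HD HUtau).
Qed.

Hypothesis HA : is_Jmorphism A.

(* The wedge condition for [L → I] evaluated at [eps L], which [A] fixes because [A τ = υ]. *)
Lemma end_proj_determined (J K L : Ob) {W : ob V} (f : hom V W (cE E J K)) :
  cotr (cotf_eps D K L) (π J K L ∘ f) = gcomp (π J K I ∘ f) (cotf_eps D J L).
Proof.
  rewrite cotr_comp, gcomp_compl. f_equal.
  assert (Hw := end_proj_gwedge J K L I).
  apply (f_equal (fun k => k ∘ (idm _ ⊗₁ (ttau T L I ∘ cur (runit (proj1_sig L)))))) in Hw.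
  rewrite <- gcomp_compr, <- (comp_assoc (idm _ ⊗₁ _) (sym _ _)), sym_nat,
    (comp_assoc (sym _ _) (_ ⊗₁ _)), <- gcomp_compl, <- !comp_assoc,
    !(comp_assoc (cur _) (ttau T L I) (A L I)), (proj2 HA) in Hw.
  unfold cotf_eps, eps. rewrite cotr_gcomp. exact (eq_sym Hw).
Qed.

Lemma end_hom_ext_unit (J K : Ob) {W : ob V} (f g : hom V W (cE E J K)) :
  π J K I ∘ f = π J K I ∘ g -> f = g.
Proof.
  intros Hfg. apply end_hom_ext. intro L.
  destruct (cotf_eps_transpose_bij D HD HUcat K L (dcot D J L) W) as [Hinj _].
  apply Hinj. rewrite !end_proj_determined, Hfg. reflexivity.
Qed.

Lemma end_diagonal_unit (J K : Ob) {X Y : ob V} (e : hom V X Y) (u : hom V X (cE E J K))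
  (w : hom V Y (H (dcot D J I) (dcot D K I))) :
  is_epi e -> w ∘ e = π J K I ∘ u ->
  exists d : hom V Y (cE E J K), d ∘ e = u /\ π J K I ∘ d = w.
Proof.
  intros He Hwe.
  assert (Hlift : forall L, exists q : hom V Y (H (dcot D J L) (dcot D K L)),
             cotr (cotf_eps D K L) q = gcomp w (cotf_eps D J L)).
  { intro L. apply (cotf_eps_transpose_bij D HD HUcat K L). }
  set (q := fun L => proj1_sig (constructive_indefinite_description _ (Hlift L))).
  assert (Hq : forall L, cotr (cotf_eps D K L) (q L) = gcomp w (cotf_eps D J L))
    by (intro L; exact (proj2_sig (constructive_indefinite_description _ (Hlift L)))).
  assert (Hqe : forall L, q L ∘ e = π J K L ∘ u).
  { intro L.
    destruct (cotf_eps_transpose_bij D HD HUcat K L (dcot D J L) X) as [Hinj _].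
    apply Hinj. rewrite cotr_comp, Hq, end_proj_determined, <- gcomp_compl, Hwe.
    reflexivity. }
  assert (Hq_wedge : gwedge J K q).
  { apply (gwedge_epi_descent J K e _ q He (gwedge_precomp J K _ u (end_proj_gwedge J K)) Hqe). }
  exists (cfactor E q). split.
  - apply end_hom_ext. intro L. rewrite comp_assoc, (end_factor_proj J K q Hq_wedge). apply Hqe.
  - rewrite (end_factor_proj J K q Hq_wedge). apply He. rewrite Hqe, Hwe. reflexivity.
Qed.

Lemma iota_strong_mono (J K : Ob) : strong_mono (iota E J K).
Proof.
  set (c := castU (U := U) (dcot_JI D J) (dcot_JI D K)).
  set (c' := castU (U := U) (eq_sym (dcot_JI D J)) (eq_sym (dcot_JI D K))).
  assert (Hc'c : c' ∘ c = idm _) by apply castU_symK.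
  assert (Hcc' : c ∘ c' = idm _) by apply castUK.
  change (iota E J K) with (c ∘ π J K I).
  split.
  - intros W f g Hfg. apply end_hom_ext_unit.
    apply (split_mono_cancel c' c); [exact Hc'c |]. rewrite !comp_assoc. exact Hfg.
  - intros X Y e He u v Hve.
    destruct (end_diagonal_unit J K e u (c' ∘ v) He) as [d [Hde Hdv]].
    { rewrite <- comp_assoc, Hve, !comp_assoc, Hc'c, comp_idl. reflexivity. }
    exists d. split; [exact Hde |].
    rewrite <- comp_assoc, Hdv, comp_assoc, Hcc', comp_idl. reflexivity.
Qed.

End Commutant.

Theorem proposition7p5 (V : CSMC) (S : Arities V) (T U : JTh S)
    (A : forall J K : Jobj S, hom V (thom T J K) (thom U J K))
    (D : DesigCot U) (E : CommEnds D) :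
  is_Jtheory T -> is_Jtheory U -> is_Jmorphism A ->
  is_designated D -> is_commutant_ends A E ->
  is_Jmorphism (T := commutant E) (U := U) (iota E) /\
  (forall J K : Jobj S, strong_mono (iota E J K)).
Proof.
  intros _ [HUcat [HUtau _]] HA HD HE.
  split.
  - exact (iota_is_Jmorphism A D E HE HUcat HD HUtau).
  - exact (iota_strong_mono A D E HE HUcat HD HA).
Qed.
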